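(* Let $\Gamma$ be a reduct of $(\mathbb{Z};<)$ with finite relational signature. Then for all $a_1,a_2\in\mathbb{Z}$ at least one of the following holds: (i) there are $r\ge0$ and a finite $S\subseteq\mathbb{Z}$ with $\{a_1,a_2\}\subseteq S$ such that every homomorphism $f$ from $\Gamma[S]$ to $\Gamma$ satisfies $|f(a_1)-f(a_2)|\le r$; (ii) there is a homomorphism $h\colon\Gamma\to\mathbb{Q}.\Gamma$ such that $h(a_1)$ and $h(a_2)$ lie in different copies of $\mathbb{Z}$ in $\mathbb{Q}.\mathbb{Z}$.
   Context: A reduct of $(\mathbb{Z};<)$ is a relational structure with domain $\mathbb{Z}$ whose relations are first-order definable in $(\mathbb{Z};<)$; $\Gamma[S]$ is the induced substructure on $S$. $\mathbb{Q}.\mathbb{Z}=\mathbb{Q}\times\mathbb{Z}$ with the lexicographic order; its copies of $\mathbb{Z}$ are the sets $\{a\}\times\mathbb{Z}$. $\mathbb{Q}.\Gamma$ is the structure on $\mathbb{Q}.\mathbb{Z}$ interpreting each relation symbol of $\Gamma$ by the relation defined over $(\mathbb{Q}.\mathbb{Z};<)$ by a first-order formula defining it over $(\mathbb{Z};<)$. *)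

From HB Require Import structures.
From mathcomp Require Import all_boot all_order all_algebra.
Set Implicit Arguments. Unset Strict Implicit. Unset Printing Implicit Defensive.
Import Order.TTheory GRing.Theory Num.Theory.
Local Open Scope ring_scope.

(* First-order formulas in the language {<} (with equality), variables as
   de Bruijn indices: variable k refers to the k-th entry of the environment;
   FEx binds index 0 and shifts the others. *)
Inductive fo : Type :=
  | FLt : nat -> nat -> fo
  | FEq : nat -> nat -> fo
  | FNot : fo -> fo
  | FAnd : fo -> fo -> fo
  | FEx : fo -> fo.

Definition scons (D : Type) (d : D) (e : nat -> D) : nat -> D :=
  fun k => match k with 0%N => d | k'.+1 => e k' end.

Fixpoint sat (D : Type) (lt : D -> D -> Prop) (e : nat -> D) (phi : fo) : Prop :=
  match phi with
  | FLt i j => lt (e i) (e j)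
  | FEq i j => e i = e j
  | FNot p => ~ sat lt e p
  | FAnd p q => sat lt e p /\ sat lt e q
  | FEx p => exists d : D, sat lt (scons d e) p
  end.

Fixpoint fv_below (n : nat) (phi : fo) : bool :=
  match phi with
  | FLt i j => (i < n)%N && (j < n)%N
  | FEq i j => (i < n)%N && (j < n)%N
  | FNot p => fv_below n p
  | FAnd p q => fv_below n p && fv_below n q
  | FEx p => fv_below n.+1 p
  end.

Definition Zlt (x y : int) : Prop := x < y.

(* Q.Z = Q x Z with the lexicographic order; copies of Z are {a} x Z. *)
Definition QZ := (rat * int)%type.
Definition QZlt (p q : QZ) : Prop :=
  (p.1 < q.1) \/ (p.1 = q.1 /\ p.2 < q.2).

(* A reduct Gamma of (Z;<) with finite relational signature is given by
   m relation symbols, symbol i of arity ar i, interpreted by the relation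
   defined over (Z;<) by the formula phi i (free variables < ar i).
   A tuple of arity n is represented by a function t : nat -> D, of which
   only the entries t 0, ..., t (n-1) matter. *)

Definition relZ (m : nat) (phi : 'I_m -> fo) (i : 'I_m) (t : nat -> int) : Prop :=
  sat Zlt t (phi i).
Definition relQZ (m : nat) (phi : 'I_m -> fo) (i : 'I_m) (t : nat -> QZ) : Prop :=
  sat QZlt t (phi i).

Definition hom_induced (m : nat) (ar : 'I_m -> nat) (phi : 'I_m -> fo)
    (S : seq int) (f : int -> int) : Prop :=
  forall (i : 'I_m) (t : nat -> int),
    (forall k, (k < ar i)%N -> t k \in S) ->
    relZ phi i t -> relZ phi i (fun k => f (t k)).

Definition hom_to_QZ (m : nat) (ar : 'I_m -> nat) (phi : 'I_m -> fo)
    (h : int -> QZ) : Prop :=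
  forall (i : 'I_m) (t : nat -> int),
    relZ phi i t -> relQZ phi i (fun k => h (t k)).

(* If (i) fails, pick for every n a homomorphism f_n from Gamma[S_n], with
   S_n containing a1, a2 and [-n, n), such that |f_n a1 - f_n a2| > n.  A
   diagonal subsequence makes every difference f_j y - f_j x either
   eventually constant or divergent to +oo or -oo.  "Eventually constant
   difference" is an equivalence on Z whose classes are linearly ordered by
   divergence; embedding this countable order into Q and laying each class
   out as a translate of Z gives h : Z -> Q.Z, and a1, a2 land in different
   classes.  The structures (Z;<) and (Q.Z;<) are both ordered sums of
   copies of Z, and in such structures a formula of radius K cannot
   distinguish tuples that agree on the order and on all distances up to K
   (a back-and-forth argument).  Since the tuples f_j o t eventually agree
   with h o t in this sense, h preserves every relation of Gamma. *)

From HB Require Import structures.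
From mathcomp Require Import all_boot all_order all_algebra.
From mathcomp Require Import zify ring lra.
From Stdlib Require Import Classical ClassicalEpsilon.
Import Order.TTheory GRing.Theory Num.Theory.
Local Open Scope ring_scope.
Set Implicit Arguments. Unset Strict Implicit.

(** * Ordered sums of copies of Z *)

(* [d u v = Some c] when v lies c steps after u in the same copy of Z, and
   [d u v = None] when u and v lie in different copies. *)
Record zchains (D : Type) (lt : D -> D -> Prop) (d : D -> D -> option int) :
    Prop := ZChains {
  zc_inhabited : inhabited D;
  zc_lt_trans : forall u v w, lt u v -> lt v w -> lt u w;
  zc_lt_irrefl : forall u, ~ lt u u;
  zc_lt_total : forall u v, lt u v \/ u = v \/ lt v u;
  zc_d_refl : forall u, d u u = Some 0;
  zc_d_eq0 : forall u v, d u v = Some 0 -> u = v;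
  zc_d_lt : forall u v c, d u v = Some c -> (lt u v <-> 0 < c);
  zc_d_add : forall u v w a b, d u v = Some a -> d v w = Some b ->
    d u w = Some (a + b);
  zc_d_opp : forall u v a, d u v = Some a -> d v u = Some (- a);
  zc_lt_copyr : forall u v w c, d u v = None -> d v w = Some c ->
    (lt u v <-> lt u w);
  zc_lt_copyl : forall u v w c, d u v = None -> d v w = Some c ->
    (lt v u <-> lt w u);
  zc_d_surj : forall u c, exists v, d u v = Some c }.

Definition far (D : Type) (d : D -> D -> option int) (K : int) (u v : D) :=
  forall c, d u v = Some c -> -K <= c -> c <= K -> False.

Lemma exists_maximal (D : Type) (lt : D -> D -> Prop) (e : nat -> D)
    (lt_trans : forall u v w, lt u v -> lt v w -> lt u w)
    (lt_irrefl : forall u, ~ lt u u) (P : nat -> Prop) n :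
  (exists k, (k < n)%N /\ P k) ->
  exists k, [/\ (k < n)%N, P k & forall l, (l < n)%N -> P l -> ~ lt (e k) (e l)].
Proof.
elim: n => [|n IH]; first by case=> k [].
move=> [k0 [k0n Pk0]].
case: (classic (exists k, (k < n)%N /\ P k)) => [/IH[k [kn Pk max_k]]|none].
  case: (classic (P n /\ lt (e k) (e n))) => [[Pn lt_kn]|not_n].
    exists n; split => // l; rewrite ltnS leq_eqVlt => /orP[/eqP->|ln] Pl.
      exact: lt_irrefl.
    by move=> lt_nl; apply: (max_k l ln Pl); exact: lt_trans lt_kn lt_nl.
  exists k; split => //; first exact: ltnW.
  move=> l; rewrite ltnS leq_eqVlt => /orP[/eqP->|ln] Pl; last exact: max_k.
  by move=> lt_kn; apply: not_n.
have k0E : k0 = n.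
  move: k0n; rewrite ltnS leq_eqVlt => /orP[/eqP//|k0n].
  by case: none; exists k0.
subst k0; exists n; split => // l; rewrite ltnS leq_eqVlt => /orP[/eqP->|ln] Pl.
  exact: lt_irrefl.
by case: none; exists l.
Qed.

Section ZChainsTheory.

Variables (D : Type) (lt : D -> D -> Prop) (d : D -> D -> option int).
Hypothesis zc : zchains lt d.

Lemma d_oppN u v : d u v = None -> d v u = None.
Proof.
move=> E; case E': (d v u) => [a|] //.
by rewrite (zc_d_opp zc E') in E.
Qed.

Lemma d_addSN u v w a : d u v = Some a -> d v w = None -> d u w = None.
Proof.
move=> E1 E2; case E: (d u w) => [b|] //.
by rewrite (zc_d_add zc (zc_d_opp zc E1) E) in E2.
Qed.

Lemma d_addNS u v w c : d u v = None -> d v w = Some c -> d u w = None.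
Proof.
move=> E1 E2; case E: (d u w) => [b|] //.
by rewrite (zc_d_add zc E (zc_d_opp zc E2)) in E1.
Qed.

Lemma eq_d0 u v : u = v <-> d u v = Some 0.
Proof. split=> [->|]. exact: (zc_d_refl zc). exact: (zc_d_eq0 zc). Qed.

Lemma gt_iff u v : lt v u <-> ~ lt u v /\ u <> v.
Proof.
split=> [h|[h1 h2]].
  split=> [h'|E]; last by subst; exact: (zc_lt_irrefl zc h).
  exact: (zc_lt_irrefl zc (zc_lt_trans zc h' h)).
by case: (zc_lt_total zc u v) => [h|[h|//]]; [case: h1 | case: h2].
Qed.

Lemma far_sym K u v : far d K u v -> far d K v u.
Proof.
move=> F c E c1 c2; apply: (F (- c)); first exact: (zc_d_opp zc E).
- lia.
- lia.
Qed.

Lemma far_shift K K' u v w c :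
  far d K u v -> d v w = Some c -> -K' <= c -> c <= K' -> K' + K' <= K ->
  far d K' u w /\ (lt u v <-> lt u w).
Proof.
move=> F E c1 c2 KK; split.
  move=> b Eb b1 b2; apply: (F (b - c)); [|lia|lia].
  exact: (zc_d_add zc Eb (zc_d_opp zc E)).
case Ed: (d u v) => [a|]; last exact: (zc_lt_copyr zc Ed E).
have a_big : ~ (-K <= a /\ a <= K) by move=> [a1 a2]; exact: F a Ed a1 a2.
rewrite (zc_d_lt zc Ed) (zc_d_lt zc (zc_d_add zc Ed E)).
lia.
Qed.

Lemma far_above K u v w c :
  0 <= K -> u = v \/ lt u v -> d v w = Some c -> K < c -> far d K u w /\ lt u w.
Proof.
move=> K0 [<-|h] E cK.
  split; first by move=> b; rewrite E => -[<-]; lia.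
  by apply/(zc_d_lt zc E); lia.
case Ed: (d u v) => [a|].
  have a0 : 0 < a by apply/(zc_d_lt zc Ed).
  have E' := zc_d_add zc Ed E; split.
    by move=> b; rewrite E' => -[<-]; lia.
  by apply/(zc_d_lt zc E'); lia.
have E' := d_addNS Ed E; split; first by move=> b; rewrite E'.
exact/(zc_lt_copyr zc Ed E).
Qed.

Lemma far_below K C v y w c :
  d v y = Some c -> 0 < c -> lt v w -> far d C v w -> c + K <= C -> 0 <= K ->
  far d K y w /\ lt y w.
Proof.
move=> E c0 l F cC K0.
have E1 := zc_d_opp zc E.
case Ed: (d v w) => [a|].
  have a0 : 0 < a by apply/(zc_d_lt zc Ed).
  have aC : C < a by have := F a Ed; lia.
  have E' := zc_d_add zc E1 Ed; split.
    by move=> b; rewrite E' => -[<-]; lia.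
  by apply/(zc_d_lt zc E'); lia.
have E' := d_addSN E1 Ed; split; first by move=> b; rewrite E'.
exact/(zc_lt_copyl zc (d_oppN Ed) E).
Qed.

Lemma far_trans A B u v w :
  lt u v -> lt v w -> far d A u v -> far d B v w -> 0 <= A -> 0 <= B ->
  far d (A + B + 1) u w.
Proof.
move=> l1 l2 F1 F2 A0 B0 c E c1 c2.
have c0 : 0 < c by apply/(zc_d_lt zc E); exact: (zc_lt_trans zc l1 l2).
case Ed: (d u v) => [a|]; last first.
  have /(zc_lt_copyr zc (d_oppN Ed) E) l3 := l2.
  exact: (zc_lt_irrefl zc (zc_lt_trans zc l1 l3)).
have a0 : 0 < a by apply/(zc_d_lt zc Ed).
have aA : A < a by have := F1 a Ed; lia.
have E2 := zc_d_add zc (zc_d_opp zc Ed) E.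
have b0 : 0 < - a + c by apply/(zc_d_lt zc E2).
have := F2 _ E2; lia.
Qed.

Lemma zchains_dual : zchains (fun u v => lt v u) (fun u v => d v u).
Proof.
constructor.
- exact: (zc_inhabited zc).
- by move=> u v w h1 h2; exact: (zc_lt_trans zc h2 h1).
- exact: (zc_lt_irrefl zc).
- by move=> u v; case: (zc_lt_total zc u v) => [h|[h|h]]; auto.
- exact: (zc_d_refl zc).
- by move=> u v E; symmetry; exact: (zc_d_eq0 zc E).
- by move=> u v c E; exact: (zc_d_lt zc E).
- by move=> u v w a b E1 E2; rewrite addrC; exact: (zc_d_add zc E2 E1).
- by move=> u v a E; exact: (zc_d_opp zc E).
- by move=> u v w c E1 E2; exact: (zc_lt_copyl zc (d_oppN E1) (zc_d_opp zc E2)).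
- by move=> u v w c E1 E2; exact: (zc_lt_copyr zc (d_oppN E1) (zc_d_opp zc E2)).
- move=> u c; have [v Ev] := zc_d_surj zc u (- c); exists v.
  by rewrite (zc_d_opp zc Ev) opprK.
Qed.

End ZChainsTheory.

(** * Back and forth *)

Definition pair_iso (D1 D2 : Type) (lt1 : D1 -> D1 -> Prop)
    (d1 : D1 -> D1 -> option int) (lt2 : D2 -> D2 -> Prop)
    (d2 : D2 -> D2 -> option int) (K : int) u1 v1 u2 v2 :=
  (lt1 u1 v1 <-> lt2 u2 v2) /\
  (forall c, -K <= c -> c <= K -> (d1 u1 v1 = Some c <-> d2 u2 v2 = Some c)).

Definition env_iso (D1 D2 : Type) (lt1 : D1 -> D1 -> Prop)
    (d1 : D1 -> D1 -> option int) (lt2 : D2 -> D2 -> Prop)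
    (d2 : D2 -> D2 -> option int) (K : int) (n : nat)
    (e1 : nat -> D1) (e2 : nat -> D2) :=
  forall k l, (k < n)%N -> (l < n)%N ->
    pair_iso lt1 d1 lt2 d2 K (e1 k) (e1 l) (e2 k) (e2 l).

Lemma env_iso_swap D1 D2 lt1 d1 lt2 d2 K n e1 e2 :
  @env_iso D1 D2 lt1 d1 lt2 d2 K n e1 e2 -> env_iso lt2 d2 lt1 d1 K n e2 e1.
Proof.
move=> M k l kn ln; have [lt_iff d_iff] := M k l kn ln.
by split=> [|c c1 c2]; [|rewrite d_iff]; tauto.
Qed.

Lemma env_iso_dual D1 D2 lt1 d1 lt2 d2 K n e1 e2 :
  @env_iso D1 D2 lt1 d1 lt2 d2 K n e1 e2 ->
  env_iso (fun u v => lt1 v u) (fun u v => d1 v u)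
          (fun u v => lt2 v u) (fun u v => d2 v u) K n e1 e2.
Proof. by move=> M k l kn ln; exact: M l k ln kn. Qed.

Section PairIso.

Variables (D1 D2 : Type) (lt1 : D1 -> D1 -> Prop) (d1 : D1 -> D1 -> option int).
Variables (lt2 : D2 -> D2 -> Prop) (d2 : D2 -> D2 -> option int).
Hypotheses (zc1 : zchains lt1 d1) (zc2 : zchains lt2 d2).

Local Notation iso := (pair_iso lt1 d1 lt2 d2).
Local Notation eiso := (env_iso lt1 d1 lt2 d2).

Lemma pair_iso_d K u1 v1 u2 v2 a :
  d1 u1 v1 = Some a -> d2 u2 v2 = Some a -> iso K u1 v1 u2 v2.
Proof.
move=> E1 E2; split; first by rewrite (zc_d_lt zc1 E1) (zc_d_lt zc2 E2).
by move=> c _ _; rewrite E1 E2.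
Qed.

Lemma pair_iso_far K u1 v1 u2 v2 :
  far d1 K u1 v1 -> far d2 K u2 v2 -> (lt1 u1 v1 <-> lt2 u2 v2) ->
  iso K u1 v1 u2 v2.
Proof.
move=> F1 F2 E; split=> // c c1 c2.
by split=> [/F1|/F2] /(_ c1 c2).
Qed.

Lemma pair_iso_le K K' u1 v1 u2 v2 :
  K' <= K -> iso K u1 v1 u2 v2 -> iso K' u1 v1 u2 v2.
Proof. by move=> KK [h1 h2]; split=> // c c1 c2; apply: h2; lia. Qed.

Lemma pair_iso_sym K u1 v1 u2 v2 :
  0 <= K -> iso K u1 v1 u2 v2 -> iso K v1 u1 v2 u2.
Proof.
move=> K0 [lt_iff d_iff]; split.
  have eq_iff : u1 = v1 <-> u2 = v2.
    by rewrite (eq_d0 zc1) (eq_d0 zc2); apply: d_iff; lia.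
  rewrite (gt_iff zc1) (gt_iff zc2); tauto.
move=> c c1 c2; have d_iff' := d_iff (- c) ltac:(lia) ltac:(lia).
split=> E; rewrite -[c]opprK.
  by apply: (zc_d_opp zc2); apply/d_iff'; exact: (zc_d_opp zc1 E).
by apply: (zc_d_opp zc1); apply/d_iff'; exact: (zc_d_opp zc2 E).
Qed.

Lemma far_transfer K C u1 v1 u2 v2 :
  iso K u1 v1 u2 v2 -> far d1 C u1 v1 -> C <= K -> far d2 C u2 v2.
Proof.
move=> [_ d_iff] F CK c E c1 c2.
by apply: (F c) => //; apply/(d_iff c); [lia|lia|].
Qed.

Lemma env_iso_cons K K' n e1 e2 x y :
  0 <= K' -> K' <= K -> eiso K n e1 e2 ->
  (forall l, (l < n)%N -> iso K' (e1 l) x (e2 l) y) ->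
  eiso K' n.+1 (scons x e1) (scons y e2).
Proof.
move=> K0 KK M h [|k] [|l] /= kn ln.
- exact: (pair_iso_d K' (zc_d_refl zc1 x) (zc_d_refl zc2 y)).
- exact: (pair_iso_sym K0 (h l ln)).
- exact: h.
- exact: (pair_iso_le KK (M k l kn ln)).
Qed.

Lemma env_iso_extend_near K K' n e1 e2 x k c :
  0 <= K' -> K' + K' <= K -> eiso K n e1 e2 -> (k < n)%N ->
  d1 (e1 k) x = Some c -> -K' <= c -> c <= K' ->
  exists y, eiso K' n.+1 (scons x e1) (scons y e2).
Proof.
move=> K0 KK M kn Ec c1 c2.
have [y Ey] := zc_d_surj zc2 (e2 k) c.
exists y; apply: (env_iso_cons K0 _ M); first lia.
move=> l ln; have [lt_iff d_iff] := M l k ln kn.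
case: (classic (exists a, d1 (e1 l) (e1 k) = Some a /\ -K <= a /\ a <= K))
  => [[a [Ea [a1 a2]]]|none].
  have Ea2 : d2 (e2 l) (e2 k) = Some a by apply/(d_iff a a1 a2).
  exact: (pair_iso_d K' (zc_d_add zc1 Ea Ec) (zc_d_add zc2 Ea2 Ey)).
have F1 : far d1 K (e1 l) (e1 k) by move=> a Ea a1 a2; apply: none; exists a.
have F2 := far_transfer (M l k ln kn) F1 (lexx K).
have [F1' o1] := far_shift zc1 F1 Ec c1 c2 KK.
have [F2' o2] := far_shift zc2 F2 Ey c1 c2 KK.
apply: pair_iso_far => //; tauto.
Qed.

(* A new point x far from the e1 k and above one of them is matched by a
   point just K'+1 above the image of the largest e1 k below x. *)
Lemma env_iso_extend_above K K' n e1 e2 x :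
  0 <= K' -> K' + K' + 2 <= K -> eiso K n e1 e2 ->
  (forall k, (k < n)%N -> far d1 K' (e1 k) x) ->
  (exists k, (k < n)%N /\ lt1 (e1 k) x) ->
  exists y, eiso K' n.+1 (scons x e1) (scons y e2).
Proof.
move=> K0 KK M F below.
have [km [kmn lt_km max_km]] :=
  exists_maximal e1 (zc_lt_trans zc1) (zc_lt_irrefl zc1) below.
have [y Ey] := zc_d_surj zc2 (e2 km) (K' + 1).
exists y; apply: (env_iso_cons K0 _ M); first lia.
move=> l ln; have [lt_iff d_iff] := M l km ln kmn.
case: (zc_lt_total zc1 (e1 l) x) => [lo|[El|up]].
- have le1 : e1 l = e1 km \/ lt1 (e1 l) (e1 km).
    case: (zc_lt_total zc1 (e1 l) (e1 km)) => [|[|/(max_km l ln lo)]]; tauto.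
  have le2 : e2 l = e2 km \/ lt2 (e2 l) (e2 km).
    case: le1 => [E|/lt_iff]; last by right.
    left; apply/(eq_d0 zc2); apply/(d_iff 0); [lia|lia|exact/(eq_d0 zc1)].
  have [F2 l2] := far_above zc2 K0 le2 Ey ltac:(lia).
  by apply: pair_iso_far; [exact: F | exact: F2 | split].
- by case: (F l ln 0); [rewrite El; exact: (zc_d_refl zc1) | lia | lia].
- have F1 := far_trans zc1 lt_km up (F km kmn) (far_sym zc1 (F l ln)) K0 K0.
  have [lt_iff' _] := M km l kmn ln.
  have F2 := far_transfer (M km l kmn ln) F1 ltac:(lia).
  have l2 : lt2 (e2 km) (e2 l) by apply/lt_iff'; exact: (zc_lt_trans zc1 lt_km up).
  have [F2' l2'] := far_below zc2 (K := K') Ey ltac:(lia) l2 F2 ltac:(lia) K0.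
  apply: pair_iso_far; [exact: F | exact: (far_sym zc2 F2') |].
  split=> h; first by case: (zc_lt_irrefl zc1 (zc_lt_trans zc1 h up)).
  by case: (zc_lt_irrefl zc2 (zc_lt_trans zc2 h l2')).
Qed.

End PairIso.

Lemma env_iso_extend D1 D2 lt1 d1 lt2 d2 (zc1 : @zchains D1 lt1 d1)
    (zc2 : @zchains D2 lt2 d2) K K' n e1 e2 :
  0 <= K' -> K' + K' + 2 <= K -> env_iso lt1 d1 lt2 d2 K n e1 e2 ->
  forall x, exists y, env_iso lt1 d1 lt2 d2 K' n.+1 (scons x e1) (scons y e2).
Proof.
move=> K0 KK M x.
case: (classic (exists k c, [/\ (k < n)%N, d1 (e1 k) x = Some c, -K' <= c & c <= K']))
  => [[k [c [kn Ec c1 c2]]]|none].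
  by apply: (env_iso_extend_near zc1 zc2 K0 _ M kn Ec c1 c2); lia.
have F : forall k, (k < n)%N -> far d1 K' (e1 k) x.
  by move=> k kn c Ec c1 c2; apply: none; exists k, c.
case: (classic (exists k, (k < n)%N /\ lt1 (e1 k) x)) => [below|nbelow].
  exact: (env_iso_extend_above zc1 zc2 K0 KK M F below).
case: (classic (exists k, (k < n)%N /\ lt1 x (e1 k))) => [above|nabove].
  have F' k (kn : (k < n)%N) := far_sym zc1 (F k kn).
  have [y My] := env_iso_extend_above (zchains_dual zc1) (zchains_dual zc2)
    K0 KK (env_iso_dual M) F' above.
  by exists y; apply: (env_iso_dual My).
case: (zc_inhabited zc2) => y; exists y.
apply: (env_iso_cons zc1 zc2 K0 _ M); first lia.
move=> l ln; exfalso.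
case: (zc_lt_total zc1 (e1 l) x) => [h|[h|h]].
- by apply: nbelow; exists l.
- by apply: (F l ln 0); [rewrite h; exact: (zc_d_refl zc1) | lia | lia].
- by apply: nabove; exists l.
Qed.

(* An existential of radius r needs a (2r+2)-isomorphism: see the
   hypothesis of [env_iso_extend]. *)
Fixpoint fo_radius (phi : fo) : nat :=
  match phi with
  | FLt _ _ | FEq _ _ => 0
  | FNot p => fo_radius p
  | FAnd p q => maxn (fo_radius p) (fo_radius q)
  | FEx p => (2 * fo_radius p + 2)%N
  end.

Lemma sat_env_iso D1 D2 lt1 d1 lt2 d2 (zc1 : @zchains D1 lt1 d1)
    (zc2 : @zchains D2 lt2 d2) phi n K e1 e2 :
  fv_below n phi -> (fo_radius phi)%:Z <= K -> env_iso lt1 d1 lt2 d2 K n e1 e2 ->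
  (sat lt1 e1 phi <-> sat lt2 e2 phi).
Proof.
elim: phi n K e1 e2 => [i j|i j|p IH|p IHp q IHq|p IH] n K e1 e2 /=.
- by move=> /andP[iN jN] _ M; exact: (proj1 (M i j iN jN)).
- move=> /andP[iN jN] hK M.
  by rewrite (eq_d0 zc1) (eq_d0 zc2); apply: (proj2 (M i j iN jN)); lia.
- by move=> fv hK M; have := IH n K e1 e2 fv hK M; tauto.
- move=> /andP[fp fq] hK M.
  have := IHp n K e1 e2 fp ltac:(lia) M; have := IHq n K e1 e2 fq ltac:(lia) M.
  tauto.
- move=> fv hK M; have K0 : 0 <= (fo_radius p)%:Z by [].
  split=> [[x Hx]|[y Hy]].
    have [y My] := env_iso_extend zc1 zc2 (K := K) K0 ltac:(lia) M x.
    by exists y; apply/(IH n.+1 _ _ _ fv (lexx _) My).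
  have [x Mx] := env_iso_extend zc2 zc1 (K := K) K0 ltac:(lia) (env_iso_swap M) y.
  by exists x; apply/(IH n.+1 _ _ _ fv (lexx _) (env_iso_swap Mx)).
Qed.

(** * The instances (Z;<) and (Q.Z;<) *)

Definition int_dist (u v : int) : option int := Some (v - u).
Definition QZ_dist (p q : QZ) : option int :=
  if p.1 == q.1 then Some (q.2 - p.2) else None.

Lemma zchains_int : zchains Zlt int_dist.
Proof.
rewrite /Zlt /int_dist; constructor.
- by constructor; exact: 0.
- move=> u v w; lia.
- move=> u; lia.
- by move=> u v; case: (ltgtP u v); auto.
- by move=> u; rewrite subrr.
- by move=> u v [] /eqP; rewrite subr_eq0 => /eqP ->.
- by move=> u v c [<-]; lia.
- by move=> u v w a b [<-] [<-]; congr Some; lia.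
- by move=> u v a [<-]; congr Some; lia.
- by [].
- by [].
- by move=> u c; exists (u + c); congr Some; lia.
Qed.

Lemma zchains_QZ : zchains QZlt QZ_dist.
Proof.
rewrite /QZlt /QZ_dist; constructor.
- by constructor; exact: (0, 0).
- move=> [p1 p2] [q1 q2] [r1 r2] /= [h|[E h]] [h'|[E' h']]; subst => /=.
  + by left; exact: lt_trans h h'.
  + by left.
  + by left.
  + by right; split => //; exact: lt_trans h h'.
- by move=> [p1 p2] /= [h|[_ h]]; rewrite ltxx in h.
- move=> [p1 p2] [q1 q2] /=.
  case: (ltgtP p1 q1) => h; [by left; left|by right; right; left|].
  subst; case: (ltgtP p2 q2) => h; [by left; right|by right; right; right|].
  by subst; right; left.
- by move=> [p1 p2] /=; rewrite eqxx subrr.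
- move=> [p1 p2] [q1 q2] /=; case: eqP => // -> [] /eqP.
  by rewrite subr_eq0 => /eqP ->.
- move=> [p1 p2] [q1 q2] c /=; case: eqP => // -> [<-].
  rewrite ltxx; split=> [[] // -[] _|h]; [lia | right; split => //; lia].
- move=> [p1 p2] [q1 q2] [r1 r2] a b /=.
  case: eqP => // E1 [<-]; case: eqP => // E2 [<-].
  by rewrite E1 E2 eqxx; congr Some; lia.
- move=> [p1 p2] [q1 q2] a /=; case: eqP => // -> [<-].
  by rewrite eqxx; congr Some; lia.
- move=> [p1 p2] [q1 q2] [r1 r2] c /=.
  case: eqP => // ne _; case: eqP => // <- _.
  split=> [[h|[E _]]|[h|[E _]]]; by [left | exfalso; apply: ne; congruence].
- move=> [p1 p2] [q1 q2] [r1 r2] c /=.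
  case: eqP => // ne _; case: eqP => // <- _.
  split=> [[h|[E _]]|[h|[E _]]]; by [left | exfalso; apply: ne; congruence].
- move=> [p1 p2] c; exists (p1, p2 + c) => /=.
  by rewrite eqxx; congr Some; lia.
Qed.

(** * A diagonal subsequence *)

Definition eventually (P : nat -> Prop) := exists J, forall j, (J <= j)%N -> P j.

Definition infinitely_often (A : nat -> Prop) :=
  forall N, exists n, (N <= n)%N /\ A n.

Definition settles_on (B : nat -> Prop) (u : nat -> int) :=
  (exists c, eventually (fun n => B n -> u n = c)) \/
  (forall M, eventually (fun n => B n -> M < u n)) \/
  (forall M, eventually (fun n => B n -> u n < M)).

Definition settles (u : nat -> int) :=
  (exists c, eventually (fun n => u n = c)) \/
  (forall M, eventually (fun n => M < u n)) \/
  (forall M, eventually (fun n => u n < M)).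

Lemma eventually_and P Q :
  eventually P -> eventually Q -> eventually (fun j => P j /\ Q j).
Proof.
move=> [J1 h1] [J2 h2]; exists (maxn J1 J2) => j hj.
by split; [apply: h1 | apply: h2]; lia.
Qed.

Lemma eventually_ex P : eventually P -> exists j, P j.
Proof. by move=> [J h]; exists J; apply: h. Qed.

Lemma eventually_forall_lt (P : nat -> nat -> Prop) n :
  (forall k, (k < n)%N -> eventually (P k)) ->
  eventually (fun j => forall k, (k < n)%N -> P k j).
Proof.
elim: n => [|n IH] h; first by exists 0%N.
have [J1 h1] := IH (fun k kn => h k (ltnW kn)).
have [J2 h2] := h n (ltnSn n).
exists (maxn J1 J2) => j hj k; rewrite ltnS leq_eqVlt => /orP[/eqP->|kn].
  by apply: h2; lia.
by apply: h1 => //; lia.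
Qed.

Lemma eventually_along (B P : nat -> Prop) (s : nat -> nat) :
  (forall j, (j <= s j)%N) -> eventually (fun j => B (s j)) ->
  eventually (fun n => B n -> P n) -> eventually (fun j => P (s j)).
Proof.
move=> s_ge [J1 h1] [J2 h2]; exists (maxn J1 J2) => j hj.
by apply: h2; [have := s_ge j; lia | apply: h1; lia].
Qed.

Lemma not_infinitely_often (A B : nat -> Prop) :
  ~ infinitely_often (fun n => A n /\ B n) -> eventually (fun n => A n -> ~ B n).
Proof.
move=> not_inf; apply: NNPP => not_ev; apply: not_inf => N.
apply: NNPP => none; apply: not_ev; exists N => n hN An Bn.
by apply: none; exists n.
Qed.

Lemma finite_fibres_unbounded (u : nat -> int) (A : nat -> Prop) :
  (forall c, eventually (fun n => A n -> u n <> c)) ->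
  forall M, eventually (fun n => A n -> 0 < u n -> M < u n).
Proof.
move=> fib.
suff nat_bound (m : nat) : eventually (fun n => A n -> 0 < u n -> m%:Z < u n).
  move=> M; have [N h] := nat_bound `|M|%N.
  by exists N => n hn An u0; have := h n hn An u0; lia.
elim: m => [|m [N1 IH]]; first by exists 0%N.
have [N2 h2] := fib m.+1%:Z.
exists (maxn N1 N2) => n hn An u0.
by have := IH n ltac:(lia) An u0; have := h2 n ltac:(lia) An; lia.
Qed.

Lemma settles_on_refine (u : nat -> int) A : infinitely_often A ->
  exists B, [/\ infinitely_often B, (forall n, B n -> A n) & settles_on B u].
Proof.
move=> infA.
case: (classic (exists c, infinitely_often (fun n => A n /\ u n = c))) =>
    [[c infc]|no_const].
  exists (fun n => A n /\ u n = c); split=> [||]; [by []|by move=> n []|].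
  by left; exists c, 0%N => n _ [].
have fib c : eventually (fun n => A n -> u n <> c).
  by apply: not_infinitely_often => infc; apply: no_const; exists c.
case: (classic (infinitely_often (fun n => A n /\ 0 < u n))) => [infp|no_pos].
  exists (fun n => A n /\ 0 < u n); split=> [||]; [by []|by move=> n []|].
  right; left => M; have [N h] := finite_fibres_unbounded fib M.
  by exists N => n hn [An un]; exact: h.
have [N0 hN0] := not_infinitely_often no_pos.
have fibN c : eventually (fun n => A n -> - u n <> c).
  by have [N h] := fib (- c); exists N => n hn An E; apply: (h n hn An); lia.
have [N1 h1] := fib 0.
exists (fun n => A n /\ u n < 0); split; last 2 first.
- by move=> n [].
- right; right => M; have [N h] := finite_fibres_unbounded fibN (- M).
  by exists N => n hn [An un]; have := h n hn An ltac:(lia); lia.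
move=> N; have [n [hn An]] := infA (maxn N (maxn N0 N1)).
exists n; split; first lia.
by split => //; have := hN0 n ltac:(lia) An; have := h1 n ltac:(lia) An; lia.
Qed.

Section Diagonal.

Variable u : nat -> nat -> int.

Definition iset := {A : nat -> Prop | infinitely_often A}.

Definition refinement (A : iset) k :=
  constructive_indefinite_description _ (settles_on_refine (u k) (svalP A)).

Definition refine_step (A : iset) k : iset :=
  exist _ (sval (refinement A k))
    (let: And3 infB _ _ := svalP (refinement A k) in infB).

Lemma refine_step_sub A k n : sval (refine_step A k) n -> sval A n.
Proof. by have [_ sub _] := svalP (refinement A k); apply: sub. Qed.

Lemma refine_step_settles A k : settles_on (sval (refine_step A k)) (u k).
Proof. by have [] := svalP (refinement A k). Qed.

Lemma infinitely_oftenT : infinitely_often (fun _ => True).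
Proof. by move=> N; exists N. Qed.

Fixpoint nested k : iset :=
  if k is k'.+1 then refine_step (nested k') k'
  else exist _ (fun _ => True) infinitely_oftenT.

Lemma nested_mono k j n : (k <= j)%N -> sval (nested j) n -> sval (nested k) n.
Proof.
move=> /subnKC <-; elim: (j - k)%N => [|i IH]; first by rewrite addn0.
by rewrite addnS => /refine_step_sub /IH.
Qed.

Definition pick_after (A : iset) N : nat :=
  sval (constructive_indefinite_description _ (svalP A N)).

Lemma pick_afterP (A : iset) N : (N <= pick_after A N)%N /\ sval A (pick_after A N).
Proof. by rewrite /pick_after; case: constructive_indefinite_description. Qed.

Lemma diagonal_settles :
  exists s : nat -> nat, (forall j, (j <= s j)%N) /\
    forall k, settles (fun j => u k (s j)).
Proof.
pose s j := pick_after (nested j) j.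
have s_ge j : (j <= s j)%N by case: (pick_afterP (nested j) j).
exists s; split=> // k.
have inB : eventually (fun j => sval (nested k.+1) (s j)).
  exists k.+1 => j kj; apply: (nested_mono kj).
  by case: (pick_afterP (nested j) j).
case: (refine_step_settles (nested k) k) => [[c h]|[h|h]].
- by left; exists c; exact: eventually_along s_ge inB h.
- by right; left => M; exact: eventually_along s_ge inB (h M).
- by right; right => M; exact: eventually_along s_ge inB (h M).
Qed.

End Diagonal.

(** * Embedding a countable preorder into Q *)

Definition pdec (Q : Prop) : bool :=
  if excluded_middle_informative Q then true else false.

Lemma pdecP Q : reflect Q (pdec Q).
Proof. by rewrite /pdec; case: excluded_middle_informative => h; constructor. Qed.

Definition dyad k : rat := (2 ^+ k)^-1.

Lemma dyad_gt0 k : 0 < dyad k.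
Proof. by rewrite /dyad invr_gt0 exprn_gt0. Qed.

Lemma dyadS k : dyad k = dyad k.+1 + dyad k.+1.
Proof. by rewrite /dyad exprS; field; rewrite expf_neq0. Qed.

Lemma sum_dyad m n : \sum_(m.+1 <= k < m.+1 + n) dyad k = dyad m - dyad (m + n).
Proof.
elim: n => [|n IH]; first by rewrite addn0 big_geq ?addn0 // subrr.
rewrite addnS big_nat_recr /=; last by rewrite leq_addr.
by rewrite IH (dyadS (m + n)) addSn -addnS; lra.
Qed.

Definition dyadic (a : nat -> bool) N : rat :=
  \sum_(0 <= k < N) (if a k then dyad k else 0).

Lemma dyadic_ext a N N' : (forall k, (N <= k)%N -> a k = false) -> (N <= N')%N ->
  dyadic a N' = dyadic a N.
Proof.
move=> a0 NN; rewrite /dyadic (@big_cat_nat _ _ _ N 0%N N' _ _ (leq0n N) NN) /=.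
have -> : \sum_(N <= k < N') (if a k then dyad k else 0) = 0.
  by rewrite big_nat big1 // => k /andP[/a0 ->].
by rewrite addr0.
Qed.

Lemma dyadic_lt (a b : nat -> bool) N m : (m < N)%N ->
  (forall k, (k < m)%N -> a k -> b k) -> a m = false -> b m = true ->
  dyadic a N < dyadic b N.
Proof.
move=> mN ab am bm; rewrite /dyadic.
rewrite !(@big_cat_nat _ _ _ m 0%N N _ _ (leq0n m) (ltnW mN)) /= !(big_ltn mN) am bm.
have head : \sum_(0 <= k < m) (if a k then dyad k else 0) <=
            \sum_(0 <= k < m) (if b k then dyad k else 0).
  apply: ler_sum_nat => k /andP[_ km].
  case ak: (a k); first by rewrite (ab k km ak).
  by case: (b k) => //; exact: ltW (dyad_gt0 k).
have tail_a : \sum_(m.+1 <= k < N) (if a k then dyad k else 0) <=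
              \sum_(m.+1 <= k < N) dyad k.
  by apply: ler_sum_nat => k _; case: (a k) => //; exact: ltW (dyad_gt0 k).
have tail_b : 0 <= \sum_(m.+1 <= k < N) (if b k then dyad k else 0).
  by rewrite big_nat; apply: sumr_ge0 => k _; case: (b k) => //; exact: ltW (dyad_gt0 k).
have tail : \sum_(m.+1 <= k < N) dyad k < dyad m.
  rewrite -(subnKC mN) sum_dyad; have := dyad_gt0 (m + (N - m.+1)); lra.
lra.
Qed.

Section RatEmbedding.

Variables (T : Type) (E P : T -> T -> Prop) (en : nat -> T).
Hypothesis en_surj : forall x, exists k, en k = x.
Hypotheses (E_refl : forall x, E x x) (E_sym : forall x y, E x y -> E y x)
  (E_trans : forall x y z, E x y -> E y z -> E x z).
Hypotheses (P_trans : forall x y z, P x y -> P y z -> P x z)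
  (EP_trans : forall x y z, E x y -> P y z -> P x z)
  (PE_trans : forall x y z, P x y -> E y z -> P x z)
  (P_nE : forall x y, P x y -> ~ E x y).

Lemma first_E_ex x : exists k, pdec (E (en k) x).
Proof. by have [k <-] := en_surj x; exists k; apply/pdecP. Qed.

Definition first_E x := ex_minn (first_E_ex x).
Definition rep x := en (first_E x).

Lemma rep_E x : E (rep x) x.
Proof. by rewrite /rep /first_E; case: ex_minnP => k /pdecP. Qed.

Lemma first_E_min x k : E (en k) x -> (first_E x <= k)%N.
Proof. by rewrite /first_E; case: ex_minnP => m _ min_m /pdecP /min_m. Qed.

Lemma first_E_eq x y : E x y -> first_E x = first_E y.
Proof.
move=> Exy; apply/eqP; rewrite eqn_leq; apply/andP; split; apply: first_E_min.
  exact: E_trans (rep_E y) (E_sym Exy).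
exact: E_trans (rep_E x) Exy.
Qed.

Lemma rep_eq x y : E x y -> rep x = rep y.
Proof. by rewrite /rep => /first_E_eq ->. Qed.

(* Digit k of [rank x] says whether the k-th enumerated element lies weakly
   below x.  Dropping the digits after [first_E x] makes the rank a class
   invariant, and two classes first differ at the representative of the
   upper one. *)
Definition digit x k := (k <= first_E x)%N && pdec (E (en k) x \/ P (en k) x).
Definition rank x : rat := dyadic (digit x) (first_E x).+1.

Lemma rank_dyadic x N : (first_E x < N)%N -> rank x = dyadic (digit x) N.
Proof.
move=> xN; rewrite /rank; symmetry; apply: dyadic_ext => // k xk.
by rewrite /digit; have -> : (k <= first_E x)%N = false by lia.
Qed.

Lemma rank_lt x y : P x y -> rank x < rank y.
Proof.
move=> Pxy; set N := (maxn (first_E x) (first_E y)).+1.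
rewrite (@rank_dyadic x N) ?(@rank_dyadic y N) /N; try lia.
apply: (dyadic_lt (m := first_E y)); first lia.
- move=> k ky /andP[_ /pdecP h]; apply/andP; split; first lia.
  by apply/pdecP; right; case: h => h; [exact: EP_trans h Pxy | exact: P_trans h Pxy].
- apply/negP => /andP[_ /pdecP [h|h]].
    by apply: (P_nE Pxy); exact: E_trans (E_sym h) (rep_E y).
  exact: P_nE (P_trans Pxy (EP_trans (E_sym (rep_E y)) h)) (E_refl x).
- by rewrite /digit leqnn /=; apply/pdecP; left; exact: rep_E.
Qed.

Lemma rank_E x y : E x y -> rank x = rank y.
Proof.
move=> Exy; rewrite /rank /dyadic (first_E_eq Exy); apply: eq_bigr => k _.
rewrite /digit (first_E_eq Exy).
have -> : pdec (E (en k) x \/ P (en k) x) = pdec (E (en k) y \/ P (en k) y).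
  apply/idP/idP => /pdecP h; apply/pdecP.
    by case: h => h; [left; exact: E_trans h Exy | right; exact: PE_trans h Exy].
  by case: h => h; [left; exact: E_trans h (E_sym Exy) | right; exact: PE_trans h (E_sym Exy)].
by [].
Qed.

End RatEmbedding.

(** * The limit map *)

Definition int_enum (k : nat) : int := if odd k then Negz k./2 else Posz k./2.

Lemma int_enum_surj x : exists k, int_enum k = x.
Proof.
case: x => n; first by exists n.*2; rewrite /int_enum odd_double doubleK.
by exists n.*2.+1; rewrite /int_enum /= odd_double /= uphalf_double.
Qed.

Section Limit.

Variable G : nat -> int -> int.
Hypothesis G_settles : forall x y, settles (fun j => G j y - G j x).

Definition close x y := exists c, eventually (fun j => G j y - G j x = c).
Definition below x y := forall M, eventually (fun j => M < G j y - G j x).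

Lemma close_refl x : close x x.
Proof. by exists 0, 0%N => j _; rewrite subrr. Qed.

Lemma close_sym x y : close x y -> close y x.
Proof. by move=> [c [J h]]; exists (- c), J => j /h; lia. Qed.

Lemma close_trans x y z : close x y -> close y z -> close x z.
Proof.
move=> [c1 h1] [c2 h2]; exists (c1 + c2).
by have [J h] := eventually_and h1 h2; exists J => j /h [? ?]; lia.
Qed.

Lemma below_trans x y z : below x y -> below y z -> below x z.
Proof.
move=> h1 h2 M; have [J h] := eventually_and (h1 M) (h2 0).
by exists J => j /h [? ?]; lia.
Qed.

Lemma close_below_trans x y z : close x y -> below y z -> below x z.
Proof.
move=> [c hc] hp M; have [J h] := eventually_and hc (hp (M - c)).
by exists J => j /h [? ?]; lia.
Qed.

Lemma below_close_trans x y z : below x y -> close y z -> below x z.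
Proof.
move=> hp [c hc] M; have [J h] := eventually_and hc (hp (M - c)).
by exists J => j /h [? ?]; lia.
Qed.

Lemma below_nclose x y : below x y -> ~ close x y.
Proof.
by move=> hp [c hc]; have [j [? ?]] := eventually_ex (eventually_and hc (hp c)); lia.
Qed.

Lemma close_or_below x y : [\/ close x y, below x y | below y x].
Proof.
case: (G_settles x y) => [h|[h|h]]; [exact: Or31 | exact: Or32 | apply: Or33].
by move=> M; have [J hJ] := h (- M); exists J => j /hJ; lia.
Qed.

Definition offset x y : int :=
  if excluded_middle_informative (close x y) is left h
  then sval (constructive_indefinite_description _ h) else 0.

Lemma offsetP x y : close x y -> eventually (fun j => G j y - G j x = offset x y).
Proof.
rewrite /offset => h; case: excluded_middle_informative => // h'.
by case: constructive_indefinite_description.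
Qed.

Local Notation lrep := (rep int_enum_surj close_refl).

(* Each class of [close] is laid out on the copy of Z at its rank, with its
   representative at 0. *)
Definition limit_map x : QZ :=
  (rank below int_enum_surj close_refl x, offset (lrep x) x).

Lemma limit_map_lt x y : below x y -> (limit_map x).1 < (limit_map y).1.
Proof.
move=> Bxy; rewrite /limit_map /=.
exact: (rank_lt int_enum_surj close_refl close_sym close_trans below_trans
  close_below_trans below_nclose Bxy).
Qed.

Lemma limit_map_close x y : close x y ->
  (limit_map x).1 = (limit_map y).1 /\
  eventually (fun j => G j y - G j x = (limit_map y).2 - (limit_map x).2).
Proof.
move=> Exy; split.
  exact: (rank_E int_enum_surj close_refl close_sym close_trans below_close_trans Exy).
rewrite /limit_map /= -(rep_eq int_enum_surj close_refl close_sym close_trans Exy).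
have rx := rep_E int_enum_surj close_refl x.
have [J hJ] := eventually_and (offsetP rx) (offsetP (close_trans rx Exy)).
by exists J => j /hJ [<- <-]; lia.
Qed.

Lemma limit_map_below K x y : 0 <= K -> below x y ->
  eventually (fun j => pair_iso Zlt int_dist QZlt QZ_dist K
    (G j x) (G j y) (limit_map x) (limit_map y)).
Proof.
move=> K0 Bxy; have [J hJ] := Bxy K; exists J => j /hJ big.
have lt_xy := limit_map_lt Bxy.
apply: pair_iso_far.
- by move=> c [<-]; lia.
- by move=> c; rewrite /QZ_dist; case: eqP => // E; rewrite E ltxx in lt_xy.
- by split=> _; [left | rewrite /Zlt; lia].
Qed.

Lemma limit_map_pair_iso K x y : 0 <= K ->
  eventually (fun j => pair_iso Zlt int_dist QZlt QZ_dist K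
    (G j x) (G j y) (limit_map x) (limit_map y)).
Proof.
move=> K0; case: (close_or_below x y) => [Exy|Bxy|Byx].
- have [same_copy [J hJ]] := limit_map_close Exy; exists J => j /hJ Ej.
  apply: (pair_iso_d zchains_int zchains_QZ K (a := (limit_map y).2 - (limit_map x).2)).
    by rewrite /int_dist Ej.
  by rewrite /QZ_dist same_copy eqxx.
- exact: limit_map_below.
- have [J hJ] := limit_map_below K0 Byx; exists J => j /hJ.
  exact: (pair_iso_sym zchains_int zchains_QZ K0).
Qed.

Lemma sat_limit phi n (t : nat -> int) : fv_below n phi ->
  eventually (fun j => sat Zlt (fun k => G j (t k)) phi) ->
  sat QZlt (fun k => limit_map (t k)) phi.
Proof.
move=> fv sat_ev; set K := (fo_radius phi)%:Z.
have iso_ev : eventually (fun j => forall k, (k < n)%N -> forall l, (l < n)%N ->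
    pair_iso Zlt int_dist QZlt QZ_dist K
      (G j (t k)) (G j (t l)) (limit_map (t k)) (limit_map (t l))).
  apply: eventually_forall_lt => k _; apply: eventually_forall_lt => l _.
  exact: limit_map_pair_iso.
have [j [sat_j iso_j]] := eventually_ex (eventually_and sat_ev iso_ev).
have iso_tj : env_iso Zlt int_dist QZlt QZ_dist K n
    (fun k => G j (t k)) (fun k => limit_map (t k)).
  by move=> k l kn ln; exact: iso_j.
exact: (sat_env_iso zchains_int zchains_QZ fv (lexx K) iso_tj).1 sat_j.
Qed.

Lemma limit_map_copy x y : (limit_map x).1 = (limit_map y).1 -> close x y.
Proof.
move=> same_copy.
by case: (close_or_below x y) => [//|/limit_map_lt|/limit_map_lt]; rewrite same_copy ltxx.
Qed.

End Limit.

Definition window (a1 a2 : int) n : seq int :=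
  a1 :: a2 :: [seq Posz i | i <- iota 0 n] ++ [seq Negz i | i <- iota 0 n].

Lemma window_l a1 a2 n : a1 \in window a1 a2 n.
Proof. by rewrite inE eqxx. Qed.

Lemma window_r a1 a2 n : a2 \in window a1 a2 n.
Proof. by rewrite !inE eqxx orbT. Qed.

Lemma window_abs a1 a2 n x : (`|x|%N < n)%N -> x \in window a1 a2 n.
Proof.
move=> xn; rewrite !inE mem_cat; apply/orP; right; apply/orP; right.
case: x xn => i /= xn; apply/orP; [left | right].
  by apply: map_f; rewrite mem_iota; lia.
by apply: map_f; rewrite mem_iota; lia.
Qed.

Lemma stretched_homs_to_QZ (m : nat) (ar : 'I_m -> nat) (phi : 'I_m -> fo)
    (Hphi : forall i, fv_below (ar i) (phi i)) (a1 a2 : int) :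
  (forall n : nat, exists f, hom_induced ar phi (window a1 a2 n) f /\
     n%:Z < `|f a1 - f a2|) ->
  exists h : int -> QZ, hom_to_QZ ar phi h /\ (h a1).1 <> (h a2).1.
Proof.
move=> stretched.
have [F FP] : exists F : nat -> int -> int, forall n,
    hom_induced ar phi (window a1 a2 n) (F n) /\ n%:Z < `|F n a1 - F n a2|.
  exists (fun n => sval (constructive_indefinite_description _ (stretched n))).
  by move=> n; case: constructive_indefinite_description.
pose u k n := if @unpickle (int * int)%type k is Some (x, y) then F n y - F n x else 0.
have [s [s_ge s_settles]] := diagonal_settles u.
pose G j := F (s j).
have G_settles x y : settles (fun j => G j y - G j x).
  by have := s_settles (pickle (x, y)); rewrite /u pickleK.
exists (limit_map G); split.
  move=> i t Rt; apply: (sat_limit G_settles (Hphi i)).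
  have [J inS] : eventually (fun j =>
      forall k, (k < ar i)%N -> t k \in window a1 a2 (s j)).
    apply: eventually_forall_lt => k _; exists (`|t k|%N.+1) => j kj.
    by apply: window_abs; have := s_ge j; lia.
  by exists J => j /inS tS; exact: (FP (s j)).1 i t tS Rt.
move=> /(limit_map_copy G_settles) [c [J hJ]].
set j := maxn J `|c|%N.
have := hJ j (leq_maxl _ _); have := (FP (s j)).2; have := s_ge j; rewrite /G; lia.
Qed.

Theorem mainTheorem7 (m : nat) (ar : 'I_m -> nat) (phi : 'I_m -> fo)
    (Hphi : forall i, fv_below (ar i) (phi i)) (a1 a2 : int) :
  (exists (r : nat) (S : seq int),
      a1 \in S /\ a2 \in S /\
      forall f : int -> int, hom_induced ar phi S f ->
        `|f a1 - f a2| <= r%:Z)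
  \/
  (exists h : int -> QZ, hom_to_QZ ar phi h /\ (h a1).1 <> (h a2).1).
Proof.
case: (classic (exists (r : nat) (S : seq int), a1 \in S /\ a2 \in S /\
    forall f : int -> int, hom_induced ar phi S f -> `|f a1 - f a2| <= r%:Z))
  => [bounded|unbounded]; [by left | right].
apply: (stretched_homs_to_QZ Hphi) => n; apply: NNPP => not_stretched.
apply: unbounded; exists n, (window a1 a2 n).
split; [exact: window_l | split; [exact: window_r | move=> f hom_f]].
by rewrite leNgt; apply/negP => stretch; apply: not_stretched; exists f.
Qed.
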